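(* Let $\alpha\in\mathbb{N}_0+\frac12$, $\mathbf m=(m_1,\dots,m_n)\in\mathbb{N}_0^n$ and $(t_{m_1},\dots,t_{m_n})\in\mathbb{R}^n$. Define recursively $\tilde\tau_0=1$, $\tilde\pi_{0;i}=C^{(\alpha)}_i$, $\tilde\rho_{0;i_1i_2}=\rho^{(\alpha)}_{i_1i_2}$, and for $j=1,\dots,n$: $\tilde\tau_j=(1+t_{m_j}\tilde\rho_{j-1;m_jm_j})\tilde\tau_{j-1}$, $\tilde\pi_{j;i}=(1+t_{m_j}\tilde\rho_{j-1;m_jm_j})\tilde\pi_{j-1;i}-t_{m_j}\tilde\rho_{j-1;im_j}\tilde\pi_{j-1;m_j}$ ($i\in\mathbb{N}_0$), $\tilde\rho_{j;i_1i_2}=\tilde\rho_{j-1;i_1i_2}-\dfrac{t_{m_j}\tilde\rho_{j-1;i_1m_j}\tilde\rho_{j-1;i_2m_j}}{1+t_{m_j}\tilde\rho_{j-1;m_jm_j}}$ ($i_1,i_2\in\mathbb{N}_0$). Then $\tau^{(\alpha)}_{\mathbf m}=\tilde\tau_n$ and $C^{(\alpha)}_{\mathbf m;i}=\tilde\pi_{n;i}$ for all $i\in\mathbb{N}_0$. In particular all $\tilde\tau_j,\tilde\pi_{j;i}$ are polynomials in $z$.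
   Context: $C^{(\alpha)}_i(z)=\sum_{k=0}^{\lfloor i/2\rfloor}(-1)^k\frac{\Gamma(i-k+\alpha)}{\Gamma(\alpha)k!(i-2k)!}(2z)^{i-2k}$ are the classical Gegenbauer polynomials; $W^{(\alpha)}(z)=(1-z^2)^{\alpha-1/2}$. For $i,j\in\mathbb{N}_0$, $\rho^{(\alpha)}_{ij}(z)=\int_{-1}^zC^{(\alpha)}_i(u)C^{(\alpha)}_j(u)W^{(\alpha)}(u)\,du$ (a polynomial since $\alpha\in\mathbb{N}_0+\frac12$). For $\mathbf m=(m_1,\dots,m_n)\in\mathbb{N}_0^n$ with real parameters $(t_{m_1},\dots,t_{m_n})$, $\mathcal R^{(\alpha)}_{\mathbf m}$ is the $n\times n$ matrix with entries $[\mathcal R^{(\alpha)}_{\mathbf m}]_{k\ell}=\delta_{k\ell}+t_{m_\ell}\rho^{(\alpha)}_{m_km_\ell}(z)$; $\tau^{(\alpha)}_{\mathbf m}=\det\mathcal R^{(\alpha)}_{\mathbf m}$; $\mathbf Q^{(\alpha)}_{\mathbf m}=\tau^{(\alpha)}_{\mathbf m}(\mathcal R^{(\alpha)}_{\mathbf m})^{-1}(C^{(\alpha)}_{m_1},\dots,C^{(\alpha)}_{m_n})^T$. For $i\in\mathbb{N}_0$, $C^{(\alpha)}_{\mathbf m;i}$ is the $(n+1)$-st entry of $\mathbf Q^{(\alpha)}_{(m_1,\dots,m_n,i)}$ computed with parameters $(t_{m_1},\dots,t_{m_n},s)$, $s\in\mathbb{R}$ arbitrary (the entry does not depend on $s$).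 *)

From mathcomp Require Import all_boot all_order all_algebra fraction.
Set Implicit Arguments. Unset Strict Implicit. Unset Printing Implicit Defensive.
Import Order.TTheory GRing.Theory Num.Theory.
Local Open Scope ring_scope.

Section Defs.
Variable R : realFieldType.

Definition alph (k : nat) : R := k%:R + 2^-1.

(* rising factorial (a)_m = Gamma(m + a) / Gamma(a) *)
Definition rising (a : R) (m : nat) : R := \prod_(r < m) (a + r%:R).

(* Gegenbauer polynomial C^{(a)}_i(z)
   = sum_{q=0}^{floor(i/2)} (-1)^q Gamma(i-q+a)/(Gamma(a) q! (i-2q)!) (2z)^(i-2q) *)
Definition gegen (a : R) (i : nat) : {poly R} :=
  \sum_(q < i./2.+1)
     (((-1) ^+ q * rising a (i - q)%N / ((q`!)%:R * ((i - 2 * q)`!)%N%:R))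
        * 2 ^+ (i - 2 * q)%N) *: 'X^(i - 2 * q)%N.

(* weight W^{(alpha)}(u) = (1-u^2)^{alpha - 1/2} = (1-u^2)^k for alpha = k+1/2 *)
Definition weight (k : nat) : {poly R} := (1 - 'X^2) ^+ k.

Definition prim (p : {poly R}) : {poly R} :=
  \poly_(j < (size p).+1) (if j is j'.+1 then p`_j' / (j'.+1)%:R else 0).

(* rho^{(alpha)}_{ij}(z) = int_{-1}^z C_i C_j W du  (alpha = k + 1/2) *)
Definition rho (k i j : nat) : {poly R} :=
  let P := prim (gegen (alph k) i * gegen (alph k) j * weight k) in
  P - (P.[-1])%:P.

Notation F := {fraction {poly R}}.

Definition pF (p : {poly R}) : F := @FracField.tofrac {poly R} p.
Definition cF (c : R) : F := pF c%:P.

(* the n x n matrix R_m with [R_m]_{kl} = delta_{kl} + t_{m_l} rho_{m_k m_l}(z);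
   m_1..m_n are m 0 .. m (n-1), the parameter attached to position l is t l *)
Definition Rmat (k n : nat) (m : nat -> nat) (t : nat -> R) : 'M[F]_n :=
  \matrix_(a < n, b < n) ((a == b)%:R + cF (t b) * pF (rho k (m a) (m b))).

Definition tau (k n : nat) (m : nat -> nat) (t : nat -> R) : F :=
  \det (Rmat k n m t).

Definition Cvec (k n : nat) (m : nat -> nat) : 'cV[F]_n :=
  \col_(a < n) pF (gegen (alph k) (m a)).

Definition Qvec (k n : nat) (m : nat -> nat) (t : nat -> R) : 'cV[F]_n :=
  tau k n m t *: (invmx (Rmat k n m t) *m Cvec k n m).

Definition ext {T : Type} (n : nat) (f : nat -> T) (x : T) : nat -> T :=
  fun j => if j == n then x else f j.

Definition Cm (k n : nat) (m : nat -> nat) (t : nat -> R) (i : nat) (s : R) : F :=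
  Qvec k n.+1 (ext n m i) (ext n t s) ord_max 0.

Fixpoint tilde (k : nat) (m : nat -> nat) (t : nat -> R) (j : nat)
  : F * (nat -> F) * (nat -> nat -> F) :=
  match j with
  | 0 => (1, fun i => pF (gegen (alph k) i), fun i1 i2 => pF (rho k i1 i2))
  | j'.+1 =>
      let: (ta, pi, rh) := tilde k m t j' in
      let mj := m j' in
      let tj := cF (t j') in
      let d := 1 + tj * rh mj mj in
      (d * ta,
       fun i => d * pi i - tj * rh i mj * pi mj,
       fun i1 i2 => rh i1 i2 - tj * rh i1 mj * rh i2 mj / d)
  end.

Definition tauT k m t j : F := (tilde k m t j).1.1.
Definition piT k m t j (i : nat) : F := (tilde k m t j).1.2 i.
Definition rhoT k m t j (i1 i2 : nat) : F := (tilde k m t j).2 i1 i2.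

End Defs.

(* Pivoting on the top-left entry of R_m, the Schur complement of R_m is again a
   matrix of the same shape, with m shifted by one and rho replaced by the updated
   rho~; the same holds for R_m bordered by a row for the index i and the column of
   Gegenbauer polynomials.  One step of the recursion is thus one step of Gaussian
   elimination: tau~ accumulates the pivots, so tau~_n = det R_m, and pi~_{n;i} is
   the determinant of the bordered matrix, which equals C_{m;i} by Cramer's rule.
   The pivots 1 + t rho~ never vanish because every rho~ vanishes at z = -1 (rho is
   an integral from -1), so each pivot is a rational function taking the value 1
   there. *)

From mathcomp Require Import all_boot all_order all_algebra fraction.
From mathcomp Require Import ring.
Set Implicit Arguments. Unset Strict Implicit. Unset Printing Implicit Defensive.
Import Order.TTheory GRing.Theory Num.Theory.
Local Open Scope ring_scope.

Section DeterminantExpansions.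
Variable K : fieldType.

Lemma det_schur_complement j (M : 'M[K]_(1 + j)) :
  let p := M (lshift j ord0) (lshift j ord0) in p != 0 ->
  \det M = p * \det (\matrix_(a, b) (M (rshift 1 a) (rshift 1 b) -
             M (rshift 1 a) (lshift j ord0) * M (lshift j ord0) (rshift 1 b) / p)).
Proof.
move=> p p_neq0.
pose L : 'M[K]_(1 + j) := block_mx 1%:M 0 (- p^-1 *: dlsubmx M) 1%:M.
have <- : \det (L *m M) = \det M by rewrite det_mulmx det_lblock !det1 !mul1r.
have ulM : ulsubmx M = p%:M by apply/matrixP => a b; rewrite !ord1 !mxE mulr1n.
rewrite -{1}(submxK M) mulmx_block !mul1mx !mul0mx !addr0 ulM mul_mx_scalar.
rewrite scalerA mulrN mulfV // scaleN1r addNr det_ublock det_scalar1.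
congr (_ * \det _); apply/matrixP => a b; rewrite !mxE big_ord1 !mxE.
by ring.
Qed.

Lemma cofactor_eq_col n (M N : 'M[K]_n) j0 : (forall a b, b != j0 -> N a b = M a b) ->
  forall a, cofactor N a j0 = cofactor M a j0.
Proof.
move=> eqNM a; rewrite /cofactor; congr (_ * \det _); apply/matrixP => i b.
by rewrite !mxE eqNM // eq_sym neq_lift.
Qed.

Lemma det_scale_col n (M N : 'M[K]_n) j0 c :
  (forall a b, b != j0 -> N a b = M a b) -> (forall a, N a j0 = c * M a j0) ->
  \det N = c * \det M.
Proof.
move=> eqNM scaleN; rewrite (expand_det_col N j0) (expand_det_col M j0) big_distrr.
by apply: eq_bigr => a _; rewrite scaleN (cofactor_eq_col eqNM) -mulrA.
Qed.

Lemma cramer_rule n (A : 'M[K]_n) (c : 'cV[K]_n) i : A \in unitmx ->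
  (\det A *: (invmx A *m c)) i 0 = \det (\matrix_(a, b) if b == i then c a 0 else A a b).
Proof.
move=> unitA; have detA_neq0 : \det A != 0 by rewrite -unitfE -unitmxE.
rewrite /invmx unitA -scalemxAl scalerA mulfV // scale1r mxE (expand_det_col _ i).
apply: eq_bigr => a _; rewrite !mxE eqxx mulrC; congr (_ * _).
by apply: cofactor_eq_col => a' b /negbTE nbi; rewrite mxE nbi.
Qed.

End DeterminantExpansions.

Section PerturbedMatrices.
Variable K : nzRingType.

Definition rmx (rh : nat -> nat -> K) (m : nat -> nat) (t : nat -> K) j : 'M[K]_j :=
  \matrix_(a, b) ((a == b)%:R + t b * rh (m a) (m b)).

Definition rmx_border (rh : nat -> nat -> K) (pi : nat -> K) (m : nat -> nat)
    (t : nat -> K) (i : nat) j : 'M[K]_j.+1 :=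
  \matrix_(a, b) if b == ord_max then pi (ext j m i a)
                 else (a == b)%:R + t b * rh (ext j m i a) (m b).

End PerturbedMatrices.

Lemma map_rmx (K L : nzRingType) (f : {rmorphism K -> L}) rh m t j :
  map_mx f (rmx rh m t j) = rmx (fun a b => f (rh a b)) m (f \o t) j.
Proof. by apply/matrixP => a b; rewrite !mxE rmorphD rmorphM rmorph_nat. Qed.

Lemma map_rmx_border (K L : nzRingType) (f : {rmorphism K -> L}) rh pi m t i j :
  map_mx f (rmx_border rh pi m t i j) =
  rmx_border (fun a b => f (rh a b)) (f \o pi) m (f \o t) i j.
Proof.
apply/matrixP => a b; rewrite !mxE; case: ifP => // _.
by rewrite rmorphD rmorphM rmorph_nat.
Qed.

Section TildeRecursion.
Variable K : fieldType.
Implicit Types (rh : nat -> nat -> K) (pi : nat -> K) (m : nat -> nat) (t : nat -> K).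

Definition pivot rh mj tj : K := 1 + tj * rh mj mj.

Definition rho_step rh mj tj i1 i2 : K :=
  rh i1 i2 - tj * rh i1 mj * rh i2 mj / pivot rh mj tj.

Definition pi_step pi rh mj tj i : K :=
  pivot rh mj tj * pi i - tj * rh i mj * pi mj.

Local Notation triple := (K * (nat -> K) * (nat -> nat -> K))%type.

Definition tilde_step mj tj (x : triple) : triple :=
  let: (ta, pi, rh) := x in
  (pivot rh mj tj * ta, pi_step pi rh mj tj, rho_step rh mj tj).

Fixpoint tilde_from (x : triple) m t j : triple :=
  if j is j'.+1 then tilde_step (m j') (t j') (tilde_from x m t j') else x.

Lemma tilde_fromSl x m t j :
  tilde_from x m t j.+1 =
  tilde_from (tilde_step (m 0) (t 0) x) (m \o succn) (t \o succn) j.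
Proof. by elim: j => //= j ->. Qed.

Lemma rho_step_sym rh mj tj : (forall a b, rh a b = rh b a) ->
  forall a b, rho_step rh mj tj a b = rho_step rh mj tj b a.
Proof. by move=> rh_sym a b; rewrite /rho_step rh_sym; ring. Qed.

Lemma eq_rshift1 j (a b : 'I_j) : (rshift 1 a == rshift 1 b :> 'I_j.+1) = (a == b).
Proof. by []. Qed.

Lemma eq_rshift1_max j (b : 'I_j.+1) :
  (rshift 1 b == ord_max :> 'I_j.+2) = (b == ord_max).
Proof. by []. Qed.

Section SchurStep.
Variables (rh : nat -> nat -> K) (m : nat -> nat) (t : nat -> K).
Hypothesis rh_sym : forall a b, rh a b = rh b a.
Let p := pivot rh (m 0) (t 0).
Hypothesis p_neq0 : p != 0.

Lemma det_rmxS j :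
  \det (rmx rh m t j.+1) =
  p * \det (rmx (rho_step rh (m 0) (t 0)) (m \o succn) (t \o succn) j).
Proof.
have := @det_schur_complement _ j (rmx rh m t j.+1).
rewrite mxE eqxx mulr1n => /(_ p_neq0) ->.
congr (_ * \det _); apply/matrixP => a b; rewrite !mxE /=.
by rewrite /rho_step (rh_sym (m 0)); ring.
Qed.

Lemma det_rmx_borderS pi i j :
  \det (rmx_border rh pi m t i j.+1) =
  \det (rmx_border (rho_step rh (m 0) (t 0)) (pi_step pi rh (m 0) (t 0))
          (m \o succn) (t \o succn) i j).
Proof.
set B' := rmx_border _ (pi_step pi rh (m 0) (t 0)) (m \o succn) (t \o succn) i j.
have := @det_schur_complement _ j.+1 (rmx_border rh pi m t i j.+1).
rewrite mxE /= mulr1n => /(_ p_neq0) ->.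
(* The Schur complement is [B'] with its last column divided by [p]. *)
rewrite (det_scale_col (M := B') (j0 := ord_max) (c := p^-1)).
- by rewrite mulrA mulfV // mul1r.
- move=> a b /negbTE b_neq_max; rewrite !mxE /= !eq_rshift1_max b_neq_max eq_rshift1.
  rewrite /ext /= !add1n eqSS.
  by rewrite /rho_step /pivot (rh_sym (m 0)); ring.
move=> a; rewrite !mxE /= eq_rshift1_max /ext /= !add1n eqSS !eqxx /pi_step.
by rewrite /p /pivot; field.
Qed.

End SchurStep.
End TildeRecursion.

Section RegularAt.
Variables (R : realFieldType) (c : R).
Local Notation FF := {fraction {poly R}}.
Implicit Types (x y : FF) (p q : {poly R}).

Definition regular_at x := exists p q, q.[c] != 0 /\ x = pF p / pF q.

Definition vanishes_at x := exists p q, [/\ q.[c] != 0, p.[c] = 0 & x = pF p / pF q].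

Lemma pF_neq0 q : q.[c] != 0 -> pF q != 0.
Proof. by rewrite tofrac_eq0; apply: contra => /eqP ->; rewrite horner0. Qed.

Lemma regular_at_cF a : regular_at (cF a).
Proof. by exists a%:P, 1; rewrite hornerC oner_neq0 /pF tofrac1 divr1. Qed.

Lemma vanishes_at_regular x : vanishes_at x -> regular_at x.
Proof. by move=> [p [q [qc _ ->]]]; exists p, q. Qed.

Lemma vanishes_atB x y : vanishes_at x -> vanishes_at y -> vanishes_at (x - y).
Proof.
move=> [p1 [q1 [q1c p1c ->]]] [p2 [q2 [q2c p2c ->]]].
exists (p1 * q2 - p2 * q1), (q1 * q2); split.
- by rewrite hornerM mulf_neq0.
- by rewrite hornerD hornerN !hornerM p1c p2c !mul0r subrr.
rewrite /pF tofracB !tofracM -mulNr addf_div ?pF_neq0 //.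
by rewrite mulNr.
Qed.

Lemma vanishes_atMr x y : vanishes_at x -> regular_at y -> vanishes_at (x * y).
Proof.
move=> [p1 [q1 [q1c p1c ->]]] [p2 [q2 [q2c ->]]].
exists (p1 * p2), (q1 * q2); split.
- by rewrite hornerM mulf_neq0.
- by rewrite hornerM p1c mul0r.
by rewrite /pF !tofracM mulf_div.
Qed.

Lemma vanishes_atMl x y : regular_at x -> vanishes_at y -> vanishes_at (x * y).
Proof. by move=> xr yv; rewrite mulrC; apply: vanishes_atMr. Qed.

Definition unit_at x := exists p q, [/\ p.[c] != 0, q.[c] != 0 & x = pF p / pF q].

Lemma unit_at_add1 x : vanishes_at x -> unit_at (1 + x).
Proof.
move=> [p [q [qc pc ->]]]; exists (q + p), q; split => //.
  by rewrite hornerD pc addr0.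
by rewrite /pF tofracD mulrDl divff ?pF_neq0.
Qed.

Lemma unit_at_neq0 x : unit_at x -> x != 0.
Proof. by move=> [p [q [pc qc ->]]]; rewrite mulf_neq0 ?invr_neq0 ?pF_neq0. Qed.

Lemma regular_at_inv x : unit_at x -> regular_at x^-1.
Proof. by move=> [p [q [pc qc ->]]]; exists q, p; rewrite invf_div. Qed.

Section TildeStepInvariant.
Variables (rh : nat -> nat -> FF) (mj : nat) (tj : FF).
Hypotheses (rh_van : forall a b, vanishes_at (rh a b)) (tj_reg : regular_at tj).

Lemma pivot_neq0 : pivot rh mj tj != 0.
Proof. exact/unit_at_neq0/unit_at_add1/vanishes_atMl. Qed.

Lemma vanishes_at_rho_step a b : vanishes_at (rho_step rh mj tj a b).
Proof.
apply: vanishes_atB => //; apply: vanishes_atMr.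
  by apply: vanishes_atMr; [apply: vanishes_atMl | apply: vanishes_at_regular].
exact/regular_at_inv/unit_at_add1/vanishes_atMl.
Qed.

End TildeStepInvariant.
End RegularAt.

Section TildeDeterminants.
Variables (R : realFieldType) (c : R).
Local Notation FF := {fraction {poly R}}.
Implicit Types (rh : nat -> nat -> FF) (pi t : nat -> FF) (m : nat -> nat).

Definition admissible (rh : nat -> nat -> FF) (t : nat -> FF) :=
  [/\ forall a b, rh a b = rh b a, forall a b, vanishes_at c (rh a b)
    & forall a, regular_at c (t a)].

Lemma admissible_step rh m t :
  admissible rh t ->
  admissible (rho_step rh (m 0) (t 0)) (t \o succn).
Proof.
case=> rh_sym rh_van t_reg; split => [||a].
- exact: rho_step_sym.
- exact: vanishes_at_rho_step.
- exact: t_reg.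
Qed.

Lemma det_rmx_neq0 j rh m t : admissible rh t -> \det (rmx rh m t j) != 0.
Proof.
elim: j rh m t => [|j IH] rh m t adm; first by rewrite det_mx00 oner_neq0.
have [rh_sym rh_van t_reg] := adm.
have p_neq0 := pivot_neq0 (m 0) rh_van (t_reg 0).
rewrite (det_rmxS rh_sym p_neq0) mulf_neq0 ?IH //; exact: admissible_step.
Qed.

Lemma tilde_from_tau j ta pi rh m t : admissible rh t ->
  (tilde_from (ta, pi, rh) m t j).1.1 = ta * \det (rmx rh m t j).
Proof.
elim: j ta pi rh m t => [|j IH] ta pi rh m t adm; first by rewrite det_mx00 mulr1.
have [rh_sym rh_van t_reg] := adm.
have p_neq0 := pivot_neq0 (m 0) rh_van (t_reg 0).
rewrite tilde_fromSl IH; last exact: admissible_step.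
by rewrite (det_rmxS rh_sym p_neq0) mulrCA mulrA.
Qed.

Lemma tilde_from_pi j ta pi rh m t i : admissible rh t ->
  (tilde_from (ta, pi, rh) m t j).1.2 i = \det (rmx_border rh pi m t i j).
Proof.
elim: j ta pi rh m t => [|j IH] ta pi rh m t adm; first by rewrite det_mx11 mxE.
have [rh_sym rh_van t_reg] := adm.
have p_neq0 := pivot_neq0 (m 0) rh_van (t_reg 0).
rewrite tilde_fromSl IH; last exact: admissible_step.
by rewrite (det_rmx_borderS rh_sym p_neq0).
Qed.

End TildeDeterminants.

Section GegenbauerTilde.
Variables (R : realFieldType) (k : nat).
Implicit Types (m : nat -> nat) (t : nat -> R) (p : {poly R}).
Local Notation rhoF := (fun a b => pF (rho R k a b)).
Local Notation gegenF := (fun i => pF (gegen (alph R k) i)).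

Lemma rho_sym i j : rho R k i j = rho R k j i.
Proof. by rewrite /rho (mulrC (gegen _ i)). Qed.

Lemma vanishes_at_rho i j : vanishes_at (-1) (pF (rho R k i j)).
Proof.
exists (rho R k i j), 1; split; first by rewrite hornerC oner_neq0.
  by rewrite /rho hornerD hornerN hornerC subrr.
by rewrite /pF tofrac1 divr1.
Qed.

Lemma admissible_rho t : admissible (-1) rhoF (fun b => cF (t b)).
Proof.
split=> [a b | a b | a]; first by rewrite rho_sym.
- exact: vanishes_at_rho.
- exact: regular_at_cF.
Qed.

Lemma tildeE m t j :
  tilde k m t j = tilde_from (1, gegenF, rhoF) m (fun b => cF (t b)) j.
Proof. by elim: j => //= j ->. Qed.

Lemma tauT_det m t j : tauT k m t j = \det (rmx rhoF m (fun b => cF (t b)) j).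
Proof.
by rewrite /tauT tildeE (tilde_from_tau (c := -1)) ?mul1r //; apply: admissible_rho.
Qed.

Lemma piT_det m t j i :
  piT k m t j i = \det (rmx_border rhoF gegenF m (fun b => cF (t b)) i j).
Proof. by rewrite /piT tildeE (tilde_from_pi (c := -1)) //; apply: admissible_rho. Qed.

Lemma tauT_poly m t j : exists p, tauT k m t j = pF p.
Proof.
exists (\det (rmx (rho R k) m (fun b => (t b)%:P) j)).
by rewrite tauT_det /pF -det_map_mx map_rmx.
Qed.

Lemma piT_poly m t j i : exists p, piT k m t j i = pF p.
Proof.
exists (\det (rmx_border (rho R k) (gegen (alph R k)) m (fun b => (t b)%:P) i j)).
by rewrite piT_det /pF -det_map_mx map_rmx_border.
Qed.

Lemma Cm_det n m t i s :
  Cm k n m t i s = \det (rmx_border rhoF gegenF m (fun b => cF (t b)) i n).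
Proof.
have unitR : Rmat k n.+1 (ext n m i) (ext n t s) \in unitmx.
  by rewrite unitmxE unitfE; apply: det_rmx_neq0 (admissible_rho _).
rewrite /Cm /Qvec /tau cramer_rule //; congr (\det _); apply/matrixP => a b.
rewrite !mxE; case: ifP => // /negbT b_neq_max.
have /negbTE b_neq_n : (b != n :> nat) := b_neq_max.
by rewrite /ext b_neq_n.
Qed.

End GegenbauerTilde.

Theorem mainTheorem15 (R : realFieldType) (k n : nat)
    (m : nat -> nat) (t : nat -> R) :
  tau k n m t = tauT k m t n /\
  (forall (i : nat) (s : R), Cm k n m t i s = piT k m t n i) /\
  (forall j : nat, (j <= n)%N ->
     (exists p : {poly R}, tauT k m t j = pF p) /\
     (forall i : nat, exists p : {poly R}, piT k m t j i = pF p)).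
Proof.
split; first by rewrite tauT_det.
split; first by move=> i s; rewrite Cm_det piT_det.
by move=> j _; split; [apply: tauT_poly | apply: piT_poly].
Qed.
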